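(* Let $X\subset L^2(\Omega)$ be a Hilbert space of functions on a bounded domain $\Omega\subset\mathbb{R}^d$ with continuous embedding, let $k>0$, let $a^{n+1}$ be a bounded bilinear form on $X$, and set $B_n(U,V)=(U,V)+k\,a^{n+1}(U,V)$, assumed coercive on $X$. Let $K$ be an element of a triangulation of $\Omega$ and let $\tilde X_K$ be a closed subspace of $X$ consisting of functions supported in $K$. Let $R\in \tilde X_K'$ and let $\tilde U_K\in\tilde X_K$ be the unique element with $B_n(\tilde U_K,\tilde V)=\langle R,\tilde V\rangle$ for all $\tilde V\in\tilde X_K$. Let $p\in C^1(\bar K)$ with $p>0$ on $\bar K$, and assume there is a family $\{\hat z_j\}_{j\in\mathbb N}\subset\tilde X_K$ and real numbers $\lambda_j$ such that: (i) each $\hat z_j$ is an eigenfunction of the operator associated with $a^{n+1}$ on $\tilde X_K$, i.e. $a^{n+1}(\hat z_j,\tilde V)=\lambda_j(\hat z_j,\tilde V)_{L^2(K)}$ for all $\tilde V\in\tilde X_K$; (ii) $\{\hat z_j\}$ is an orthonormal system in $L^2_p(K)$; (iii) the linear span of $\{\hat z_j\}$ is dense in $\tilde X_K$; (iv) $p\,\hat z_j\in\tilde X_K$ for all $j$; (v) $\Lambda_j:=1+k\lambda_j\neq 0$ for all $j$. Then $$\tilde U_K=\sum_{j=0}^{\infty}\beta_j\,\langle R,p\,\hat z_j\rangle\,\hat z_j,\qquad \beta_j=\Lambda_j^{-1}=(1+k\lambda_j)^{-1},$$ where the series converges in $L^2_p(K)$.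
   Context: For a measurable function $p$ on $K$ that is positive a.e., $L^2_p(K)=\{W:K\to\mathbb R \text{ measurable}: p|W|^2\in L^1(K)\}$ with inner product $(W_1,W_2)_p=\int_K p\,W_1W_2\,dx$. $(\cdot,\cdot)$ denotes the $L^2$ inner product. In the paper, $R$ is the residual $\langle R_n(U_h^{n+1}),\tilde V\rangle=l^{n+1}(\tilde V)-B_n(U_h^{n+1},\tilde V)$ of the large-scale component at time step $n$, and $\tilde U_K$ is the element sub-scale. *)

From HB Require Import structures.
From mathcomp Require Import all_boot all_order all_algebra.
From mathcomp Require Import all_classical all_reals all_analysis.
Set Implicit Arguments. Unset Strict Implicit. Unset Printing Implicit Defensive.
Import Order.TTheory GRing.Theory Num.Theory.
Import numFieldNormedType.Exports.
Local Open Scope classical_set_scope.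
Local Open Scope ring_scope.

Section Defs.
Context (R : realType) (dsp : measure_display) (T : measurableType dsp).
Implicit Types (X Y : set (T -> R)) (f g : T -> R).

Definition linear_subspace X :=
  X (fun _ => 0) /\ (forall (c : R) f g, X f -> X g -> X (fun x => c * f x + g x)).

Definition L2 (mu : {measure set T -> \bar R}) (D : set T) f :=
  measurable_fun D f /\ (\int[mu]_(x in D) ((f x) ^+ 2)%:E < +oo)%E.

Definition ip2 (mu : {measure set T -> \bar R}) (D : set T) f g :=
  Rintegral mu D (fun x => f x * g x).

Definition ipw (mu : {measure set T -> \bar R}) (D : set T) (p : T -> R) f g :=
  Rintegral mu D (fun x => p x * f x * g x).
Definition normw (mu : {measure set T -> \bar R}) (D : set T) (p : T -> R) f :=
  Num.sqrt (ipw mu D p f f).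

Definition ipnorm (ip : (T -> R) -> (T -> R) -> R) f := Num.sqrt (ip f f).

Definition hilbert_space X (ip : (T -> R) -> (T -> R) -> R) :=
  [/\ linear_subspace X,
      (forall f g, X f -> X g -> ip f g = ip g f),
      (forall (c : R) f g h, X f -> X g -> X h ->
          ip (fun x => c * f x + g x) h = c * ip f h + ip g h),
      (forall f, X f -> 0 <= ip f f) &
      (forall u : nat -> T -> R, (forall n, X (u n)) ->
         (forall e : R, 0 < e -> exists N : nat, forall m n, (N <= m)%N -> (N <= n)%N ->
             ipnorm ip (fun x => u m x - u n x) < e) ->
         exists l, X l /\
           (fun n => ipnorm ip (fun x => u n x - l x)) @ \oo --> (0 : R))].

Definition continuous_embedding (mu : {measure set T -> \bar R}) (Omega : set T)
    X (ip : (T -> R) -> (T -> R) -> R) :=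
  (forall f, X f -> L2 mu Omega f) /\
  exists C : R, forall f, X f -> ip2 mu Omega f f <= C * ip f f.

Definition bounded_bilinear X (ip : (T -> R) -> (T -> R) -> R)
    (a : (T -> R) -> (T -> R) -> R) :=
  [/\ (forall (c : R) f g h, X f -> X g -> X h ->
          a (fun x => c * f x + g x) h = c * a f h + a g h),
      (forall (c : R) f g h, X f -> X g -> X h ->
          a h (fun x => c * f x + g x) = c * a h f + a h g) &
      exists M : R, forall f g, X f -> X g ->
          `|a f g| <= M * ipnorm ip f * ipnorm ip g].

Definition Bn (mu : {measure set T -> \bar R}) (Omega : set T) (k : R)
    (a : (T -> R) -> (T -> R) -> R) f g :=
  ip2 mu Omega f g + k * a f g.

Definition coercive X (ip : (T -> R) -> (T -> R) -> R)
    (B : (T -> R) -> (T -> R) -> R) :=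
  exists alpha : R, 0 < alpha /\ forall f, X f -> alpha * ip f f <= B f f.

Definition closed_subspace X (ip : (T -> R) -> (T -> R) -> R) Y :=
  [/\ linear_subspace Y, Y `<=` X &
      forall (u : nat -> T -> R) l, (forall n, Y (u n)) -> X l ->
        (fun n => ipnorm ip (fun x => u n x - l x)) @ \oo --> (0 : R) -> Y l].

Definition supported_in (K : set T) f := forall x, ~ K x -> f x = 0.

Definition bounded_functional Y (ip : (T -> R) -> (T -> R) -> R)
    (F : (T -> R) -> R) :=
  (forall (c : R) f g, Y f -> Y g -> F (fun x => c * f x + g x) = c * F f + F g) /\
  exists C : R, forall f, Y f -> `|F f| <= C * ipnorm ip f.

Definition span_dense Y (ip : (T -> R) -> (T -> R) -> R) (z : nat -> T -> R) :=
  forall f, Y f -> forall e : R, 0 < e ->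
    exists (n : nat) (c : nat -> R),
      ipnorm ip (fun x => f x - \sum_(j < n) c j * z j x) < e.

End Defs.

(* The weighted product (f, g)_p is a semi-inner product on X dominated by the
   Hilbert norm, so density of span {z_j} in X_K makes the Fourier expansion of
   U_K in the orthonormal system {z_j} of L^2_p(K) converge, its partial sums
   being best approximations.
   Testing the sub-scale equation with p z_j gives
   <R, p z_j> = (U_K, z_j)_p + k a(U_K, p z_j), and a(., p z_j) - lambda_j (., z_j)_p
   is a bounded linear functional vanishing on every z_i (eigenfunction equation
   and orthonormality), hence on X_K; so <R, p z_j> = (1 + k lambda_j) (U_K, z_j)_p. *)

From HB Require Import structures.
From mathcomp Require Import all_boot all_order all_algebra.
From mathcomp Require Import all_classical all_reals all_analysis.
From mathcomp Require Import ring lra measurable_realfun.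
Set Implicit Arguments. Unset Strict Implicit. Unset Printing Implicit Defensive.
Import Order.TTheory GRing.Theory Num.Theory.
Import numFieldNormedType.Exports.
Local Open Scope classical_set_scope.
Local Open Scope ring_scope.

Section LinearSubspace.
Variables (R : realType) (dsp : measure_display) (T : measurableType dsp).
Implicit Types (S : set (T -> R)) (f g : T -> R) (c : nat -> R) (z : nat -> T -> R).

Definition lincomb c z (N : nat) : T -> R := fun x => \sum_(j < N) c j * z j x.

Definition linear_on S (L : (T -> R) -> R) :=
  forall (c : R) f g, S f -> S g -> L (fun x => c * f x + g x) = c * L f + L g.

Lemma lincomb0 c z : lincomb c z 0 = fun _ => 0.
Proof. by apply: funext => x; rewrite /lincomb big_ord0. Qed.

Lemma lincombS c z N : lincomb c z N.+1 = fun x => c N * z N x + lincomb c z N x.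
Proof. by apply: funext => x; rewrite /lincomb big_ord_recr /= addrC. Qed.

Variable S : set (T -> R).
Hypothesis hS : linear_subspace S.

Lemma linear_subspace0 : S (fun _ => 0).
Proof. by case: hS. Qed.

Lemma linear_subspaceD (c : R) f g : S f -> S g -> S (fun x => c * f x + g x).
Proof. by case: hS => _; apply. Qed.

Lemma linear_subspaceB f g : S f -> S g -> S (fun x => f x - g x).
Proof.
move=> Sf Sg; have -> : (fun x => f x - g x) = (fun x => -1 * g x + f x).
  by apply: funext => x; rewrite mulN1r addrC.
exact: linear_subspaceD.
Qed.

Lemma linear_subspace_lincomb c z N : (forall j, S (z j)) -> S (lincomb c z N).
Proof.
move=> Sz; elim: N => [|N IH]; first by rewrite lincomb0; exact: linear_subspace0.
by rewrite lincombS; exact: linear_subspaceD.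
Qed.

Variable L : (T -> R) -> R.
Hypothesis hL : linear_on S L.

Lemma linear_on0 : L (fun _ => 0) = 0.
Proof.
have E : (fun _ : T => 1 * 0 + 0) = (fun _ => 0 :> R).
  by apply: funext => x; rewrite mulr0 addr0.
by have := hL 1 linear_subspace0 linear_subspace0; rewrite E mul1r => ?; lra.
Qed.

Lemma linear_onB f g : S f -> S g -> L (fun x => f x - g x) = L f - L g.
Proof.
move=> Sf Sg; have -> : (fun x => f x - g x) = (fun x => -1 * g x + f x).
  by apply: funext => x; rewrite mulN1r addrC.
by rewrite hL // mulN1r addrC.
Qed.

Lemma linear_on_lincomb c z N :
  (forall j, S (z j)) -> L (lincomb c z N) = \sum_(j < N) c j * L (z j).
Proof.
move=> Sz; elim: N => [|N IH]; first by rewrite lincomb0 big_ord0 linear_on0.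
rewrite lincombS hL //; last exact: linear_subspace_lincomb.
by rewrite IH big_ord_recr /= addrC.
Qed.

Lemma linear_on_span_dense_eq0 (ip : (T -> R) -> (T -> R) -> R) z (C : R) u :
  (forall j, S (z j)) -> (forall j, L (z j) = 0) ->
  (forall f, S f -> `|L f| <= C * ipnorm ip f) ->
  span_dense S ip z -> S u -> L u = 0.
Proof.
move=> Sz Lz L_bound z_dense Su.
have L_err c n : L u = L (fun x => u x - lincomb c z n x).
  rewrite linear_onB ?linear_on_lincomb //; last exact: linear_subspace_lincomb.
  by rewrite big1 ?subr0 // => j _; rewrite Lz mulr0.
apply: normr0_eq0; apply/le_anti; rewrite normr_ge0 andbT.
apply/ler_addgt0Pr => e e_gt0; rewrite add0r.
have d_gt0 : 0 < e / (`|C| + 1) by rewrite divr_gt0 // ltr_wpDl.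
have [n [c err_lt]] := z_dense u Su _ d_gt0.
rewrite (L_err c n); apply: (le_trans (L_bound _ _)).
  by apply: linear_subspaceB => //; exact: linear_subspace_lincomb.
set t := ipnorm ip _ in err_lt *.
have t_ge0 : 0 <= t by exact: sqrtr_ge0.
have dE : e / (`|C| + 1) * (`|C| + 1) = e by rewrite divfK // gt_eqF // ltr_wpDl.
have := ler_norm C; have := normr_ge0 C; nra.
Qed.

End LinearSubspace.

Section SemiInnerProduct.
Variables (R : realType) (dsp : measure_display) (T : measurableType dsp).
Implicit Types (f g h u v : T -> R) (c : nat -> R) (z : nat -> T -> R).

Definition semi_inner_product (S : set (T -> R)) (B : (T -> R) -> (T -> R) -> R) :=
  [/\ forall h, S h -> linear_on S (B^~ h),
      forall f g, S f -> S g -> B f g = B g f &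
      forall f, S f -> 0 <= B f f].

Definition fourier_sum (B : (T -> R) -> (T -> R) -> R) u z : nat -> T -> R :=
  lincomb (fun i => B u (z i)) z.

Variables (S : set (T -> R)) (B : (T -> R) -> (T -> R) -> R).
Hypotheses (hS : linear_subspace S) (hB : semi_inner_product S B).

Lemma sip_expand (a : R) f g : S f -> S g ->
  B (fun x => a * f x + g x) (fun x => a * f x + g x) =
  a ^+ 2 * B f f + (a * B f g) *+ 2 + B g g.
Proof.
case: hB => lin sym _ Sf Sg; have Sfg := linear_subspaceD hS a Sf Sg.
rewrite lin // (sym f) // (lin f) // (sym g _ Sg Sfg) (lin g) // (sym g f) //; ring.
Qed.

Lemma sip_sqr_le f e : S f -> S e -> B e e = 1 -> B f e ^+ 2 <= B f f.
Proof.
case: hB => _ sym ge0 Sf Se ee1.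
have := ge0 _ (linear_subspaceD hS (- B f e) Se Sf).
by rewrite sip_expand // ee1 (sym e) // mulr2n; lra.
Qed.

Lemma sip_normr_le f e : S f -> S e -> B e e = 1 -> `|B f e| <= Num.sqrt (B f f).
Proof. by move=> Sf Se ee1; rewrite -sqrtr_sqr ler_wsqrtr // sip_sqr_le. Qed.

Variable z : nat -> T -> R.
Hypotheses (Sz : forall j, S (z j))
  (z_orth : forall i j, B (z i) (z j) = if i == j then 1 else 0).

Lemma fourier_err_orth u N (j : 'I_N) : S u ->
  B (fun x => u x - fourier_sum B u z N x) (z j) = 0.
Proof.
case: hB => lin _ _ Su; have lin_j := lin _ (Sz j).
rewrite (linear_onB lin_j) // ?(linear_on_lincomb hS lin_j) //;
  last exact: linear_subspace_lincomb.
rewrite (bigD1 j) //= z_orth eqxx mulr1 big1 ?addr0 ?subrr // => i ij.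
by rewrite z_orth (_ : (i : nat) == j = false) ?mulr0 //; exact: negbTE.
Qed.

Lemma fourier_sum_best u c N : S u ->
  B (fun x => u x - fourier_sum B u z N x) (fun x => u x - fourier_sum B u z N x) <=
  B (fun x => u x - lincomb c z N x) (fun x => u x - lincomb c z N x).
Proof.
case: (hB) => lin sym ge0 Su.
set e := fun x => u x - fourier_sum B u z N x.
pose w := lincomb (fun j => B u (z j) - c j) z N.
have Se : S e by apply: linear_subspaceB => //; exact: linear_subspace_lincomb.
have Sw : S w by exact: linear_subspace_lincomb.
have -> : (fun x => u x - lincomb c z N x) = (fun x => 1 * w x + e x).
  apply: funext => x; rewrite /e /w /fourier_sum /lincomb mul1r.
  rewrite [X in _ = X + _](_ : _ = \sum_(j < N) B u (z j) * z j x -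
                                   \sum_(j < N) c j * z j x); first ring.
  by rewrite -sumrB; apply: eq_bigr => j _; rewrite mulrBl.
have we0 : B w e = 0.
  rewrite (linear_on_lincomb hS (lin _ Se)) // big1 // => j _.
  by rewrite (sym (z j)) // fourier_err_orth // mulr0.
by rewrite (sip_expand 1 Sw Se) we0 mulr0 mul0rn addr0 expr1n mul1r lerDr ge0.
Qed.

Lemma fourier_sum_cvg u : S u ->
  (forall e : R, 0 < e -> exists n c,
     B (fun x => u x - lincomb c z n x) (fun x => u x - lincomb c z n x) < e) ->
  (fun N => Num.sqrt (B (fun x => u x - fourier_sum B u z N x)
                        (fun x => u x - fourier_sum B u z N x))) @ \oo --> 0.
Proof.
move=> Su approx; apply/cvgrPdist_lt => e e_gt0.
have [n [c err_lt]] := approx _ (mulr_gt0 e_gt0 e_gt0).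
near=> N; have nN : (n <= N)%N by near: N; exact: nbhs_infty_ge.
pose d j := if (j < n)%N then c j else 0.
have lincomb_widen : lincomb c z n = lincomb d z N.
  apply: funext => x; rewrite /lincomb (big_ord_widen N (fun j => c j * z j x) nN).
  by rewrite big_mkcond; apply: eq_bigr => j _; rewrite /d; case: ifP; rewrite ?mul0r.
rewrite lincomb_widen in err_lt.
rewrite sub0r normrN ger0_norm ?sqrtr_ge0 //.
have := le_lt_trans (fourier_sum_best d N Su) err_lt.
by rewrite -ltr_sqrt ?mulr_gt0 // -expr2 sqrtr_sqr gtr0_norm.
Unshelve. all: by end_near.
Qed.

Lemma sip_span_dense_approx (ip : (T -> R) -> (T -> R) -> R) (D : R) u :
  0 <= D -> (forall f, S f -> B f f <= D * ip f f) -> span_dense S ip z -> S u ->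
  forall e : R, 0 < e -> exists n c,
    B (fun x => u x - lincomb c z n x) (fun x => u x - lincomb c z n x) < e.
Proof.
move=> D_ge0 B_le z_dense Su e e_gt0.
have d_gt0 : 0 < e / (D + 1) by rewrite divr_gt0 // ltr_wpDl.
have s_gt0 : 0 < Num.sqrt (e / (D + 1)) by rewrite sqrtr_gt0.
have [n [c err_lt]] := z_dense u Su _ s_gt0.
exists n, c; rewrite /ipnorm ltr_sqrt // in err_lt.
apply: (le_lt_trans (B_le _ _)).
  by apply: linear_subspaceB => //; exact: linear_subspace_lincomb.
have dE : e / (D + 1) * (D + 1) = e by rewrite divfK // gt_eqF // ltr_wpDl.
set t := ip _ _ in err_lt *; nra.
Qed.

Lemma sip_span_dense_eq (ip a : (T -> R) -> (T -> R) -> R) (D M r : R) w v u :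
  0 <= D -> (forall f, S f -> B f f <= D * ip f f) ->
  linear_on S (a^~ w) -> (forall f, S f -> `|a f w| <= M * ipnorm ip f) ->
  S v -> B v v = 1 -> (forall i, a (z i) w = r * B (z i) v) ->
  span_dense S ip z -> S u -> a u w = r * B u v.
Proof.
case: (hB) => lin _ ge0 D_ge0 B_le a_lin a_le Sv vv1 a_z z_dense Su.
pose phi f := a f w - r * B f v.
have phi_lin : linear_on S phi.
  by move=> s f g Sf Sg; rewrite /phi a_lin // (lin v) //; ring.
have phi_le f : S f -> `|phi f| <= (M + `|r| * Num.sqrt D) * ipnorm ip f.
  move=> Sf; have Bfv_le : `|B f v| <= Num.sqrt D * ipnorm ip f.
    rewrite /ipnorm -sqrtrM //; apply: le_trans (sip_normr_le Sf Sv vv1) _.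
    by rewrite ler_wsqrtr // B_le.
  rewrite /phi mulrDl; apply: le_trans (ler_normB _ _) _.
  rewrite normrM -mulrA lerD ?a_le // ler_wpM2l //.
apply/eqP; rewrite -subr_eq0; apply/eqP.
apply: (linear_on_span_dense_eq0 hS phi_lin Sz _ phi_le z_dense Su) => i.
by rewrite /phi a_z subrr.
Qed.

End SemiInnerProduct.

Section WeightedInnerProduct.
Variables (R : realType) (dsp : measure_display) (T : measurableType dsp).
Variables (mu : {measure set T -> \bar R}) (Omega K : set T) (p : T -> R) (Mp : R).
Hypotheses (mOmega : measurable Omega) (mK : measurable K) (KOmega : K `<=` Omega).
Hypotheses (mp : measurable_fun K p) (p_gt0 : forall x, K x -> 0 < p x)
  (p_le : forall x, K x -> p x <= Mp).
Implicit Types f g : T -> R.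

Lemma L2_integrable_sqr f : L2 mu Omega f ->
  mu.-integrable Omega (EFin \o (fun x => f x * f x)).
Proof.
move=> [mf f_fin]; apply/integrableP; split.
  by apply/measurable_EFinP; exact: measurable_funM.
apply: le_lt_trans f_fin; rewrite le_eqVlt; apply/orP; left; apply/eqP.
by apply: eq_integral => x _; rewrite /= -expr2 ger0_norm // sqr_ge0.
Qed.

Lemma ipw_integrable f g : L2 mu Omega f -> L2 mu Omega g ->
  mu.-integrable K (EFin \o (fun x => p x * f x * g x)).
Proof.
move=> Lf Lg; have mfK := measurable_funS mOmega KOmega Lf.1.
have mgK := measurable_funS mOmega KOmega Lg.1.
have sqr_int h : L2 mu Omega h -> mu.-integrable K (EFin \o (fun x => h x * h x)).
  by move=> Lh; apply: integrableS mOmega mK KOmega (L2_integrable_sqr Lh).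
have bound := integrableZl mK Mp (integrableD mK (sqr_int f Lf) (sqr_int g Lg)).
apply: (le_integrable mK _ _ bound).
  by apply/measurable_EFinP; do 2 apply: measurable_funM => //.
move=> x Kx; rewrite /= lee_fin.
apply: le_trans (ler_norm _); rewrite -mulrA normrM gtr0_norm ?p_gt0 //.
have fg_le : `|f x * g x| <= f x * f x + g x * g x.
  have ff : `|f x| * `|f x| = f x * f x by rewrite -normrM ger0_norm // -expr2 sqr_ge0.
  have gg : `|g x| * `|g x| = g x * g x by rewrite -normrM ger0_norm // -expr2 sqr_ge0.
  rewrite normrM -ff -gg; have := normr_ge0 (f x); have := normr_ge0 (g x); nra.
have := p_le Kx; have := p_gt0 Kx; have := normr_ge0 (f x * g x); nra.
Qed.

Lemma ipw_semi_inner_product (X : set (T -> R)) :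
  (forall f, X f -> L2 mu Omega f) -> semi_inner_product X (ipw mu K p).
Proof.
move=> XL2; split.
- move=> h Xh c f g Xf Xg.
  have int_fh := ipw_integrable (XL2 _ Xf) (XL2 _ Xh).
  have int_gh := ipw_integrable (XL2 _ Xg) (XL2 _ Xh).
  have int_cfh : mu.-integrable K (EFin \o (fun x => c * (p x * f x * h x))).
    by apply: (eq_integrable mK _ _ _ (integrableZl mK c int_fh)) => x _; rewrite /= EFinM.
  rewrite /ipw -(RintegralZl c mK int_fh) -(RintegralD mK int_cfh int_gh).
  by apply: eq_Rintegral => x _; ring.
- by move=> f g _ _; rewrite /ipw; apply: eq_Rintegral => x _; ring.
- move=> f _; apply: Rintegral_ge0 => x Kx.
  by rewrite -mulrA -expr2 mulr_ge0 ?sqr_ge0 // ltW ?p_gt0.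
Qed.

Lemma ip2_supported f g : supported_in K f -> ip2 mu Omega f g = ip2 mu K f g.
Proof.
move=> f_supp; rewrite /ip2 (Rintegral_mkcond _ Omega) (Rintegral_mkcond _ K).
apply: eq_Rintegral => x _.
rewrite /patch; have [Kx|nKx] := pselect (K x).
  by rewrite (mem_set Kx) (mem_set (KOmega Kx)).
by rewrite (memNset nKx) f_supp // mul0r; case: ifP.
Qed.

Lemma ipw_le_ip2 f : L2 mu Omega f -> supported_in K f ->
  ipw mu K p f f <= Mp * ip2 mu Omega f f.
Proof.
move=> Lf f_supp; have int_ff := integrableS mOmega mK KOmega (L2_integrable_sqr Lf).
rewrite ip2_supported // /ipw /ip2 -RintegralZl //; apply: le_Rintegral => //.
- exact: ipw_integrable.
- by apply: (eq_integrable mK _ _ _ (integrableZl mK Mp int_ff)) => x _; rewrite /= EFinM.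
- by move=> x Kx; rewrite -mulrA -expr2 ler_wpM2r ?sqr_ge0 ?p_le.
Qed.

Lemma ipw_dominated (X XK : set (T -> R)) (ip : (T -> R) -> (T -> R) -> R) :
  0 <= Mp -> continuous_embedding mu Omega X ip -> (forall f, X f -> 0 <= ip f f) ->
  XK `<=` X -> (forall f, XK f -> supported_in K f) ->
  exists D, 0 <= D /\ forall f, XK f -> ipw mu K p f f <= D * ip f f.
Proof.
move=> Mp_ge0 [XL2 [C ip2_le]] ip_ge0 XK_X XK_supp.
exists (Mp * Num.max C 0); split; first by rewrite mulr_ge0 // le_max lexx orbT.
move=> f XKf; have Xf := XK_X _ XKf.
apply: le_trans (ipw_le_ip2 (XL2 _ Xf) (XK_supp _ XKf)) _.
rewrite -mulrA ler_wpM2l //; apply: le_trans (ip2_le _ Xf) _.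
by rewrite ler_wpM2r ?ip_ge0 // le_max lexx.
Qed.

End WeightedInnerProduct.

Section SubscaleCoefficients.
Variables (R : realType) (dsp : measure_display) (T : measurableType dsp).
Variables (mu : {measure set T -> \bar R}) (Omega K : set T) (XK : set (T -> R)).
Variables (ip a : (T -> R) -> (T -> R) -> R) (k D M : R) (Rf : (T -> R) -> R).
Variables (UK p : T -> R) (z : nat -> T -> R) (lam : nat -> R).
Let B := ipw mu K p.
Hypotheses (KOmega : K `<=` Omega) (hXK : linear_subspace XK)
  (hB : semi_inner_product XK B) (D_ge0 : 0 <= D)
  (B_le : forall f, XK f -> B f f <= D * ip f f)
  (XK_supp : forall f, XK f -> supported_in K f)
  (a_lin : forall h, XK h -> linear_on XK (a^~ h))
  (a_le : forall f g, XK f -> XK g -> `|a f g| <= M * ipnorm ip f * ipnorm ip g)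
  (XK_z : forall j, XK (z j))
  (z_eig : forall j V, XK V -> a (z j) V = lam j * ip2 mu K (z j) V)
  (z_orth : forall i j, B (z i) (z j) = if i == j then 1 else 0)
  (z_dense : span_dense XK ip z) (XK_pz : forall j, XK (fun x => p x * z j x))
  (XK_U : XK UK) (U_eq : forall V, XK V -> Bn mu Omega k a UK V = Rf V).

Lemma subscale_fourier_coef j : 1 + k * lam j != 0 ->
  (1 + k * lam j)^-1 * Rf (fun y => p y * z j y) = B UK (z j).
Proof.
move=> Lam_neq0; set w := fun y => p y * z j y; have XKw : XK w := XK_pz j.
have a_le_w f : XK f -> `|a f w| <= M * ipnorm ip w * ipnorm ip f.
  by move=> XKf; rewrite mulrAC; apply: a_le.
have a_z i : a (z i) w = lam j * B (z i) (z j).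
  have ip_z : ip2 mu K (z i) w = B (z i) (z j).
    by apply: eq_Rintegral => x _; rewrite /w; ring.
  by rewrite z_eig // ip_z z_orth; case: eqP => [->|_]; rewrite ?mulr0.
have a_U : a UK w = lam j * B UK (z j).
  apply: (sip_span_dense_eq hXK hB XK_z D_ge0 B_le (a_lin XKw) a_le_w (XK_z j) _
    a_z z_dense XK_U).
  by rewrite z_orth eqxx.
have ip_U : ip2 mu Omega UK w = B UK (z j).
  rewrite (ip2_supported mu KOmega _ (XK_supp XK_U)).
  by apply: eq_Rintegral => x _; rewrite /w; ring.
rewrite -U_eq // /Bn ip_U a_U.
have -> : B UK (z j) + k * (lam j * B UK (z j)) = (1 + k * lam j) * B UK (z j).
  by ring.
by rewrite mulKf.
Qed.

End SubscaleCoefficients.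

Theorem theorem1 (R : realType) (dsp : measure_display) (T : measurableType dsp)
  (mu : {measure set T -> \bar R}) (Omega K : set T)
  (X : set (T -> R)) (ipX : (T -> R) -> (T -> R) -> R)
  (k : R) (a : (T -> R) -> (T -> R) -> R)
  (XK : set (T -> R)) (Rf : (T -> R) -> R) (UK : T -> R)
  (p : T -> R) (z : nat -> T -> R) (lam : nat -> R) :
  measurable Omega -> (mu Omega < +oo)%E ->
  hilbert_space X ipX -> continuous_embedding mu Omega X ipX ->
  0 < k -> bounded_bilinear X ipX a ->
  coercive X ipX (Bn mu Omega k a) ->
  measurable K -> K `<=` Omega ->
  closed_subspace X ipX XK -> (forall V, XK V -> supported_in K V) ->
  bounded_functional XK ipX Rf ->
  XK UK -> (forall V, XK V -> Bn mu Omega k a UK V = Rf V) ->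
  measurable_fun K p -> (forall x, K x -> 0 < p x) ->
  (exists M : R, forall x, K x -> p x <= M) ->
  (forall j, XK (z j)) ->
  (forall j V, XK V -> a (z j) V = lam j * ip2 mu K (z j) V) ->
  (forall i j, ipw mu K p (z i) (z j) = if i == j then 1 else 0) ->
  span_dense XK ipX z ->
  (forall j, XK (fun x => p x * z j x)) ->
  (forall j, 1 + k * lam j != 0) ->
  (fun N : nat => normw mu K p (fun x => UK x -
      \sum_(j < N) (1 + k * lam j)^-1 * Rf (fun y => p y * z j y) * z j x))
    @ \oo --> (0 : R).
Proof.
move=> mOmega _ [_ _ _ ipX_ge0 _] emb _ [a_linl _ [Ma a_le]] _ mK KOmega
  [hXK XK_X _] XK_supp _ XK_U U_eq mp p_gt0 [M p_le] XK_z z_eig z_orth z_dense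
  XK_pz Lam_neq0.
pose B := ipw mu K p; pose Mp := Num.max M 1.
have Mp_ge0 : 0 <= Mp by rewrite le_max ler01 orbT.
have p_le_Mp x : K x -> p x <= Mp by move=> Kx; rewrite le_max p_le.
have hB : semi_inner_product XK B.
  by apply: (ipw_semi_inner_product mOmega mK KOmega mp p_gt0 p_le_Mp) => f /XK_X/emb.1.
have [D [D_ge0 B_le]] := ipw_dominated mOmega mK KOmega mp p_gt0 p_le_Mp
  Mp_ge0 emb ipX_ge0 XK_X XK_supp.
have a_lin h : XK h -> linear_on XK (a^~ h).
  by move=> XKh c f g XKf XKg; apply: a_linl; apply: XK_X.
have a_le_XK f g : XK f -> XK g -> `|a f g| <= Ma * ipnorm ipX f * ipnorm ipX g.
  by move=> XKf XKg; apply: a_le; apply: XK_X.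
have sum_eq N : (fun x => UK x - \sum_(j < N)
    (1 + k * lam j)^-1 * Rf (fun y => p y * z j y) * z j x) =
  (fun x => UK x - fourier_sum B UK z N x).
  apply: funext => x; congr (_ - _); apply: eq_bigr => j _.
  by rewrite (subscale_fourier_coef KOmega hXK hB D_ge0 B_le XK_supp a_lin a_le_XK
    XK_z z_eig z_orth z_dense XK_pz XK_U U_eq (Lam_neq0 j)).
under eq_fun do rewrite sum_eq.
exact: (fourier_sum_cvg hXK hB XK_z z_orth XK_U
  (sip_span_dense_approx hXK XK_z D_ge0 B_le z_dense XK_U)).
Qed.
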